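(* Let $F$ be a field, $\ell\le m$ positive integers, $V$ an $m$-dimensional $F$-vector space, and $E$ a close subspace of $\bigwedge^{\ell}V$ of dimension $r$. Then $E$ is decomposable. Moreover, if $\{\omega_1,\dots,\omega_r\}$ is a basis of $E$, then $V_E=V_{\omega_1}\cap\cdots\cap V_{\omega_r}$ and $V^E=V_{\omega_1}+\cdots+V_{\omega_r}$. Further, if $r>1$, then $\dim V_E=\ell-1$ and $\dim V^E=\ell+r-1$ if $E$ is close of type I, whereas $\dim V_E=\ell-r+1$ and $\dim V^E=\ell+1$ if $E$ is close of type II.
   Context: For $\omega\in\bigwedge^{\ell}V$, $V_\omega=\{v\in V: v\wedge\omega=0\}$. For a subspace $E$ of $\bigwedge^{\ell}V$, $V_E=\bigcap_{\omega\in E}V_\omega$ and $V^E=\sum_{0\ne\omega\in E}V_\omega$. A nonzero $\omega$ is decomposable if $\omega=v_1\wedge\cdots\wedge v_\ell$ with $v_i\in V$; a subspace is decomposable if all nonzero elements are. With $r=\dim E$: $E$ is close of type I if there are linearly independent $f_1,\dots,f_{\ell-1},g_1,\dots,g_r\in V$ with $E=\mathrm{span}\{f_1\wedge\cdots\wedge f_{\ell-1}\wedge g_i:1\le i\le r\}$; close of type II if there are linearly independent $u_1,\dots,u_{\ell-r+1},g_1,\dots,g_r\in V$ with $E=\mathrm{span}\{u_1\wedge\cdots\wedge u_{\ell-r+1}\wedge g_1\wedge\cdots\wedge\widehat{g_i}\wedge\cdots\wedge g_r:1\le i\le r\}$ ($\widehat{g_i}$ omitted); close if of type I or type II. *)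

(* Exterior algebra of V = 'rV[F]_m modelled concretely in the
   standard basis e_S (S a subset of 'I_m, e_S = e_{s1} /\ ... /\ e_{sk},
   s1 < ... < sk). *)
From HB Require Import structures.
From mathcomp Require Import all_boot all_order all_algebra.
From mathcomp Require Import ring.
Set Implicit Arguments. Unset Strict Implicit. Unset Printing Implicit Defensive.
Import Order.TTheory GRing.Theory.
Local Open Scope ring_scope.

Section Exterior.
Variables (F : fieldType) (m : nat).

Definition ext := {ffun {set 'I_m} -> F^o}.

Definition ebasis (X : {set 'I_m}) : ext := [ffun T => (T == X)%:R].

Definition ext1 : ext := ebasis set0.

(* left multiplication by a vector:  v /\ w, using
   e_i /\ e_T = (-1)^#{j in T | j < i} e_(T u {i}) if i \notin T, 0 otherwise *)
Definition wedgev (v : 'rV[F]_m) (w : ext) : ext :=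
  [ffun X : {set 'I_m} =>
     \sum_(i in X) (-1) ^+ #|[set j in X | (j < i)%N]| * v 0 i * w (X :\ i)].

Definition wedges (vs : seq 'rV[F]_m) : ext := foldr wedgev ext1 vs.

Definition extpow (l : nat) : {vspace ext} :=
  <<[seq ebasis X | X <- enum [set X : {set 'I_m} | #|X| == l]]>>%VS.

Definition wedgevr (w : ext) (v : 'rV[F]_m) : ext := wedgev v w.

Lemma wedgev_is_linear (w : ext) : linear (wedgevr w).
Proof.
move=> a u v; apply/ffunP => X; rewrite !ffunE.
rewrite scaler_sumr -big_split /=; apply: eq_bigr => i _; rewrite !mxE.
rewrite [a *: _]/GRing.scale /=; ring.
Qed.

HB.instance Definition _ (w : ext) :=
  GRing.isLinear.Build F 'rV[F]_m ext _ (wedgevr w) (wedgev_is_linear w).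

Definition Vw (w : ext) : {vspace 'rV[F]_m} := lker (linfun (wedgevr w)).

Lemma memVw (w : ext) (v : 'rV[F]_m) : (v \in Vw w) = (wedgev v w == 0).
Proof.
rewrite /Vw memv_ker lfunE //=.
Qed.

Definition in_VE (E : {vspace ext}) (v : 'rV[F]_m) : Prop :=
  forall w, w \in E -> v \in Vw w.

(* V^E = sum of the V_w, 0 <> w in E : the elements of V that are finite sums
   of elements of such V_w *)
Definition in_VuE (E : {vspace ext}) (v : 'rV[F]_m) : Prop :=
  exists ws : seq ext, all (fun w => (w \in E) && (w != 0)) ws /\
                       v \in (\sum_(w <- ws) Vw w)%VS.

Definition decomposable_elt (l : nat) (w : ext) : Prop :=
  exists vs : seq 'rV[F]_m, size vs = l /\ w = wedges vs.

Definition decomposable_sub (l : nat) (E : {vspace ext}) : Prop :=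
  forall w, w \in E -> w != 0 -> decomposable_elt l w.

Definition closeI (l : nat) (E : {vspace ext}) : Prop :=
  exists fs gs : seq 'rV[F]_m,
    [/\ (size fs).+1 = l, size gs = \dim E, free (fs ++ gs) &
        E = <<[seq wedges (rcons fs g) | g <- gs]>>%VS].

(* close of type II (r = dim E):
   E = span{ u1/\.../\u_(l-r+1)/\g1/\..^gi../\gr } *)
Definition closeII (l : nat) (E : {vspace ext}) : Prop :=
  exists us gs : seq 'rV[F]_m,
    [/\ size us + \dim E = l.+1, size gs = \dim E, free (us ++ gs) &
        E = <<[seq wedges (us ++ (take i gs ++ drop i.+1 gs))
              | i <- iota 0 (\dim E)]>>%VS].

Definition close (l : nat) (E : {vspace ext}) : Prop := closeI l E \/ closeII l E.

End Exterior.

From HB Require Import structures.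
From mathcomp Require Import all_boot all_order all_algebra.
From mathcomp Require Import ring zify.
Set Implicit Arguments. Unset Strict Implicit. Unset Printing Implicit Defensive.
Import GRing.Theory.
Local Open Scope ring_scope.

(* Every nonzero element w of a close subspace is c a_1 /\ ... /\ a_l with
   a_1, ..., a_l independent and c <> 0: for type I, w = f_1 /\ ... /\ f_(l-1) /\ h
   with h in span(g); for type II, sum_i c_i u /\ g_1 /\ ..^g_i.. /\ g_r equals
   lam u /\ h_1 /\ ... /\ h_(r-1) with the h_j in span(g).  Since a wedge of
   vectors vanishes exactly when they are dependent, V_w is the span of the a_i.
   So every V_w lies between span(f) and span(f, g) (resp. span(u) and span(u, g)),
   and intersecting the V_w over a basis of E leaves span(f) (resp. span(u)).
   For type I the map h |-> f /\ h is injective on span(g), so the h's of a basis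
   of E span span(g) and the V_w sum to span(f, g); for type II two independent
   basis elements give distinct hyperplanes of span(u, g), which sum to all of it.
   Every V_w with w in E then lies in the sum over a basis, which describes V^E. *)

Section SeqSpans.
Variables (K : fieldType) (vT : vectType K).
Implicit Types (X : seq vT) (U : {vspace vT}).

Lemma memv_bigcap_seq (T : Type) (r : seq T) (Us : T -> {vspace vT}) v :
  (v \in (\bigcap_(t <- r) Us t)%VS) = all (fun t => v \in Us t) r.
Proof. by elim: r => [|t r IH]; rewrite ?big_nil ?memvf // big_cons memv_cap IH. Qed.

Lemma subv_sum_seq (T : Type) (r : seq T) (Us : T -> {vspace vT}) U :
  ((\sum_(t <- r) Us t)%VS <= U)%VS = all (fun t => Us t <= U)%VS r.
Proof. by elim: r => [|t r IH]; rewrite ?big_nil ?sub0v // big_cons subv_add IH. Qed.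

Lemma sumv_sup_seq (T : eqType) (r : seq T) (Us : T -> {vspace vT}) t :
  t \in r -> (Us t <= \sum_(t <- r) Us t)%VS.
Proof.
elim: r => [|x r IH] //; rewrite inE big_cons => /predU1P [->|t_r].
  exact: addvSl.
exact: subv_trans (IH t_r) (addvSr _ _).
Qed.

Lemma dim_span_free X : free X -> \dim <<X>> = size X.
Proof. exact: eqnP. Qed.

Lemma size_basis_seq U X : basis_of U X -> size X = \dim U.
Proof. by move=> basisX; rewrite -(span_basis basisX) dim_span_free ?(basis_free basisX). Qed.

Lemma memv_span_coef X v : v \in <<X>>%VS ->
  exists c : nat -> K, v = \sum_(i < size X) c i *: X`_i.
Proof.
elim: X v => [|x X IH] v.
  by rewrite span_nil memv0 => /eqP ->; exists (fun _ => 0); rewrite big_ord0.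
rewrite span_cons => /memv_addP [_ /vlineP [a ->] [z /IH [c ->] ->]].
exists (fun i => if i is j.+1 then c j else a).
by rewrite /= big_ord_recl; congr (_ + _); apply: eq_bigr => i _; rewrite lift0.
Qed.

Lemma memv_span_map (wT : vectType K) (f : vT -> wT)
    (f_lin : forall a x y, f (a *: x + y) = a *: f x + f y) X w :
  w \in <<map f X>>%VS -> exists2 h, h \in <<X>>%VS & w = f h.
Proof.
have f0 : f 0 = 0 by have := f_lin (-1) 0 0; rewrite scaler0 addr0 scaleN1r addNr.
elim: X w => [|x X IH] w /=.
  by rewrite span_nil memv0 => /eqP ->; exists 0; rewrite ?mem0v.
rewrite span_cons => /memv_addP [_ /vlineP [c ->] [z /IH [h h_X ->] ->]].
exists (c *: x + h); last by rewrite f_lin.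
by rewrite span_cons memv_add // memvZ // memv_line.
Qed.

Lemma free_catCA X Y Z : free (X ++ Y ++ Z) = free (Y ++ X ++ Z).
Proof. by apply: perm_free; rewrite perm_catCA. Qed.

Lemma free_cat_consr (us pre post : seq vT) (g : vT) :
  free (us ++ pre ++ g :: post) -> free (us ++ pre ++ post).
Proof.
have perm_g : perm_eq (us ++ pre ++ g :: post) (g :: us ++ pre ++ post).
  by apply/permP => p; rewrite /= !count_cat /=; lia.
by rewrite (perm_free perm_g) free_cons => /andP [].
Qed.

(* Dimension count: the sum of the two spans is the span of the whole free list. *)
Lemma span_cap_free (us pre post : seq vT) (g : vT) : free (us ++ pre ++ g :: post) ->
  (<<us ++ g :: post>> :&: <<us ++ pre ++ post>> = <<us ++ post>>)%VS.
Proof.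
set A := (us ++ g :: post); set B := (us ++ pre ++ post); set C := us ++ post.
move=> free_all.
have free_A : free A by move: free_all; rewrite free_catCA => /catr_free.
have free_B : free B := free_cat_consr free_all.
have free_C : free C by move: free_B; rewrite free_catCA => /catr_free.
have sub_C : (<<C>> <= <<A>> :&: <<B>>)%VS.
  by rewrite subv_cap !sub_span // => x; rewrite !mem_cat ?inE => /orP [] ->; rewrite ?orbT.
have sub_AB : (<<us ++ pre ++ g :: post>> <= <<A>> + <<B>>)%VS.
  rewrite -span_cat; apply: sub_span => x; rewrite !mem_cat !inE.
  by case/or4P => ->; rewrite ?orbT.
have := dimv_sum_cap <<A>> <<B>>; have := dimvS sub_AB.
rewrite !dim_span_free // /A /B !size_cat /= => le_AB eq_AB.
apply/eqP; rewrite eq_sym eqEdim sub_C dim_span_free // size_cat.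
by move: le_AB eq_AB; lia.
Qed.

Lemma addv_hyperplanes U W (T : {vspace vT}) : (U <= T)%VS -> (W <= T)%VS ->
  \dim U = (\dim T).-1 -> \dim W = (\dim T).-1 -> U != W -> (U + W)%VS = T.
Proof.
move=> UT WT dimU dimW neqUW; apply/eqP; rewrite eqEdim subv_add UT WT /=.
have nWU : ~~ (W <= U)%VS.
  by apply: contra neqUW => WU; rewrite eq_sym eqEdim WU dimU dimW leqnn.
have := dimv_leqif_sup (addvSl U W); rewrite subv_add subvv (negbTE nWU) => /ltn_leqif.
by rewrite dimU; lia.
Qed.

End SeqSpans.

Section WedgeProduct.
Variables (F : fieldType) (m : nat).
Local Notation ext := (ext F m).
Local Notation V := 'rV[F]_m.
Implicit Types (u v : V) (w : ext) (s : seq V).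

Lemma wedgevDZr v a w1 w2 :
  wedgev v (a *: w1 + w2) = a *: wedgev v w1 + wedgev v w2.
Proof.
apply/ffunP => X; rewrite !ffunE scaler_sumr -big_split /=.
apply: eq_bigr => i _; rewrite !ffunE.
rewrite [a *: _]/GRing.scale /= [a *: _]/GRing.scale /=; ring.
Qed.

Lemma wedgevDr v w1 w2 : wedgev v (w1 + w2) = wedgev v w1 + wedgev v w2.
Proof. by have := wedgevDZr v 1 w1 w2; rewrite !scale1r. Qed.

Lemma wedgev0r v : wedgev v 0 = 0.
Proof. by apply/ffunP => X; rewrite !ffunE big1 // => i _; rewrite ffunE mulr0. Qed.

Lemma wedgevZr v a w : wedgev v (a *: w) = a *: wedgev v w.
Proof. by rewrite -[a *: w]addr0 wedgevDZr wedgev0r addr0. Qed.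

Lemma wedgevNr v w : wedgev v (- w) = - wedgev v w.
Proof. by rewrite -scaleN1r wedgevZr scaleN1r. Qed.

Lemma wedgev_sumr v I (r : seq I) (P : pred I) (f : I -> ext) :
  wedgev v (\sum_(i <- r | P i) f i) = \sum_(i <- r | P i) wedgev v (f i).
Proof. exact: (big_morph (wedgev v) (wedgevDr v) (wedgev0r v)). Qed.

Lemma wedgevDl u v w : wedgev (u + v) w = wedgev u w + wedgev v w.
Proof. exact: (linearD (wedgevr w)). Qed.

Lemma wedgevZl a v w : wedgev (a *: v) w = a *: wedgev v w.
Proof. by rewrite -[LHS]/(wedgevr w (a *: v)) linearZ. Qed.

Lemma wedgev0l w : wedgev 0 w = 0.
Proof. exact: (linear0 (wedgevr w)). Qed.

Lemma wedgevNl v w : wedgev (- v) w = - wedgev v w.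
Proof. exact: (linearN (wedgevr w)). Qed.

Definition sgn_below (X : {set 'I_m}) (i : 'I_m) : F :=
  (-1) ^+ #|[set j in X | (j < i)%N]|.

Lemma sgn_below_setD1_gt (X : {set 'I_m}) (i k : 'I_m) : (k < i)%N ->
  sgn_below (X :\ i) k = sgn_below X k.
Proof.
move=> lt_ki; rewrite /sgn_below.
suff -> : [set j in X :\ i | (j < k)%N] = [set j in X | (j < k)%N] by [].
apply/setP => j; rewrite !inE.
case: (ltnP j k) => lt_jk; rewrite ?andbF ?andbT //.
by case: eqP => // eq_ji; move: (ltn_trans lt_jk lt_ki); rewrite eq_ji ltnn.
Qed.

Lemma sgn_below_setD1_lt (X : {set 'I_m}) (i k : 'I_m) : (k < i)%N -> k \in X ->
  sgn_below (X :\ k) i = - sgn_below X i.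
Proof.
move=> lt_ki kX; rewrite /sgn_below.
have -> : [set j in X | (j < i)%N] = k |: [set j in X :\ k | (j < i)%N].
  by apply/setP => j; rewrite !inE; case: (eqVneq j k) => [->|] /=; rewrite ?kX ?lt_ki.
by rewrite cardsU1 !inE eqxx /= add1n exprS mulN1r opprK.
Qed.

(* In the double sum over i != k in X, the terms for (i, k) and (k, i) cancel. *)
Lemma wedgevv v w : wedgev v (wedgev v w) = 0.
Proof.
apply/ffunP => X; rewrite !ffunE.
pose G i k := sgn_below X i * v 0 i *
              (sgn_below (X :\ i) k * v 0 k * w (X :\ i :\ k)).
transitivity (\sum_(i in X) \sum_(k in X | k != i) G i k).
  apply: eq_bigr => i Xi; rewrite ffunE mulr_sumr; apply: eq_big => [k|k _].
    by rewrite in_setD1 andbC.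
  by rewrite /G /sgn_below.
have split_ki i : \sum_(k in X | k != i) G i k =
    \sum_(k in X | (k < i)%N) G i k + \sum_(k in X | (i < k)%N) G i k.
  rewrite (bigID (fun k : 'I_m => (k < i)%N)) /=.
  congr (_ + _); apply: eq_bigl => k; rewrite -andbA -val_eqE /=;
    by case: (ltngtP k i); rewrite /= ?andbF ?andbT.
rewrite (eq_bigr _ (fun i _ => split_ki i)) big_split /=.
rewrite (exchange_big_dep (fun k => k \in X)) /=; last by move=> i k _ /andP[].
rewrite -big_split /= big1 // => j Xj.
rewrite (eq_bigl (fun i => (i \in X) && (j < i)%N)) => [|i]; last by rewrite Xj.
rewrite -big_split /= big1 // => k /andP[Xk lt_jk].
rewrite /G (sgn_below_setD1_gt X lt_jk) (sgn_below_setD1_lt lt_jk Xj).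
rewrite (_ : X :\ k :\ j = X :\ j :\ k); last by rewrite !setDDl setUC.
ring.
Qed.

Lemma wedgev_anticomm u v w : wedgev u (wedgev v w) = - wedgev v (wedgev u w).
Proof.
have := wedgevv (u + v) w.
rewrite !wedgevDl !wedgevDr !wedgevv add0r addr0 => /eqP.
by rewrite addr_eq0 => /eqP.
Qed.

Definition lwedge s w : ext := foldr (@wedgev F m) w s.

Lemma wedges_cat s1 s2 : wedges (s1 ++ s2) = lwedge s1 (wedges s2).
Proof. by rewrite /wedges foldr_cat. Qed.

Lemma lwedgeDZ s a w1 w2 : lwedge s (a *: w1 + w2) = a *: lwedge s w1 + lwedge s w2.
Proof. by elim: s => [|u s IH] //=; rewrite IH wedgevDZr. Qed.

Lemma lwedge0 s : lwedge s 0 = 0.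
Proof. by elim: s => [|u s IH] //=; rewrite IH wedgev0r. Qed.

Lemma lwedgeZ s a w : lwedge s (a *: w) = a *: lwedge s w.
Proof. by rewrite -[a *: w]addr0 lwedgeDZ lwedge0 addr0. Qed.

Lemma lwedgeD s w1 w2 : lwedge s (w1 + w2) = lwedge s w1 + lwedge s w2.
Proof. by have := lwedgeDZ s 1 w1 w2; rewrite !scale1r. Qed.

Lemma lwedge_sum s I (r : seq I) (P : pred I) (f : I -> ext) :
  lwedge s (\sum_(i <- r | P i) f i) = \sum_(i <- r | P i) lwedge s (f i).
Proof. exact: (big_morph (lwedge s) (lwedgeD s) (lwedge0 s)). Qed.

Lemma wedges_consZ a v s : wedges ((a *: v) :: s) = a *: wedges (v :: s).
Proof. exact: wedgevZl. Qed.

Lemma wedgev_wedges_span v s : v \in <<s>>%VS -> wedgev v (wedges s) = 0.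
Proof.
elim: s v => [|a s IH] v.
  by rewrite span_nil memv0 => /eqP ->; rewrite wedgev0l.
rewrite span_cons => /memv_addP [_ /vlineP [c ->] [z zs ->]].
rewrite wedgevDl wedgevZl wedgevv scaler0 add0r.
by rewrite wedgev_anticomm IH // wedgev0r oppr0.
Qed.

Lemma wedges_nfree s : ~~ free s -> wedges s = 0.
Proof.
elim: s => [|a s IH]; first by rewrite nil_free.
rewrite free_cons negb_and negbK => /orP [as_|nfree_s]; first exact: wedgev_wedges_span.
by rewrite /= IH // wedgev0r.
Qed.

Lemma wedges_perm_head s a : a \in s ->
  exists2 rest, perm_eq s (a :: rest) &
    wedges s = wedges (a :: rest) \/ wedges s = - wedges (a :: rest).
Proof.
elim: s => [|x s IH] //; rewrite inE; case: (eqVneq a x) => [->|neq_ax] /= a_s.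
  by exists s => //; left.
have [rest perm_s eq_s] := IH a_s.
exists (x :: rest).
  apply: (perm_trans (y := x :: a :: rest)); first by rewrite perm_cons.
  by apply/permP => p /=; rewrite addnCA.
rewrite /= wedgev_anticomm.
by case: eq_s => -> /=; [right; rewrite opprK | left; rewrite wedgevNr].
Qed.

(* Exchanging [b] for [p] costs nothing in front of [p], and lets the other
   factors drop their [b]-components. *)
Lemma wedgev_wedges_reduce b p bs : p - b \in <<bs>>%VS ->
  forall cs, all (fun c => c \in <<b :: bs>>%VS) cs ->
  exists cs' : seq V, [/\ size cs' = size cs, all (fun c => c \in <<bs>>%VS) cs' &
    wedgev p (wedges cs) = wedgev p (wedges cs')].
Proof.
move=> pb; elim => [|c cs IH] /=; first by exists [::].
case/andP => + /IH [cs' [size_cs' cs'_bs eq_cs']].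
rewrite span_cons => /memv_addP [_ /vlineP [g ->] [z zs ->]].
exists ((z - g *: (p - b)) :: cs'); split => /=; first by rewrite size_cs'.
  by rewrite cs'_bs andbT memvB // memvZ.
rewrite wedgev_anticomm eq_cs' -wedgev_anticomm.
have -> : g *: b + z = g *: p + (z - g *: (p - b)).
  by rewrite scalerBr opprB [z + _]addrC addrCA addrA subrK.
by rewrite wedgevDl wedgevZl wedgevDr wedgevZr wedgevv scaler0 add0r.
Qed.

(* If [cs] is free, some [a] in [cs] has a nonzero [b]-coordinate; moving it to
   the front and rescaling it to [b] modulo [bs] pushes the other factors into
   [<<bs>>]. *)
Lemma wedges_proportional bs cs : size cs = size bs ->
  all (fun c => c \in <<bs>>%VS) cs -> exists k : F, wedges cs = k *: wedges bs :> ext.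
Proof.
elim: bs cs => [|b bs IH] cs.
  by case: cs => // _ _; exists 1; rewrite scale1r.
move=> size_cs cs_bs.
have [/hasP [a a_cs a_nbs] | /hasPn cs_bs'] :=
  boolP (has (fun a => a \notin <<bs>>%VS) cs); last first.
  exists 0; rewrite scale0r; apply: wedges_nfree; apply/negP => free_cs.
  have : (\dim <<cs>> <= \dim <<bs>>)%N.
    by apply/dimvS/span_subvP => a /cs_bs'; rewrite negbK.
  by rewrite dim_span_free // size_cs ltnNge dim_span.
move: (allP cs_bs a a_cs); rewrite span_cons => /memv_addP [_ /vlineP [g ->] [z zs eq_a]].
have nz_g : g != 0 by apply: contraNneq a_nbs => g0; rewrite eq_a g0 scale0r add0r.
have pb : g^-1 *: a - b \in <<bs>>%VS.
  by rewrite eq_a scalerDr scalerA mulVf // scale1r addrC addKr memvZ.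
have [rest perm_cs eq_cs] := wedges_perm_head a_cs.
have rest_bs : all (fun c => c \in <<b :: bs>>%VS) rest.
  by apply/allP => c c_rest; apply: (allP cs_bs); rewrite (perm_mem perm_cs) inE c_rest orbT.
have [cs' [size_cs' cs'_bs eq_cs']] := wedgev_wedges_reduce pb rest_bs.
have [|k eq_k] := IH cs' _ cs'_bs.
  by rewrite size_cs'; move: size_cs; rewrite (perm_size perm_cs) => -[].
have eq_a_rest : wedges (a :: rest) = (g * k) *: wedges (b :: bs).
  rewrite -[a](scalerKV nz_g) wedges_consZ /= eq_cs' eq_k wedgevZr.
  rewrite -[g^-1 *: a](subrK b) wedgevDl (wedgev_wedges_span pb) add0r.
  by rewrite scalerA.
by case: eq_cs => ->; [exists (g * k) | exists (- (g * k)); rewrite scaleNr]; rewrite eq_a_rest.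
Qed.

Definition unitv (k : nat) : V := \row_(j < m) ((j : nat) == k)%:R.

Lemma wedgev_unitv (k : nat) : (k < m)%N ->
  wedgev (unitv k) (ebasis F [set j : 'I_m | (k < j)%N]) =
  ebasis F [set j : 'I_m | (k <= j)%N].
Proof.
move=> lt_km; pose ko := Ordinal lt_km.
have unitvE (i : 'I_m) : unitv k 0 i = (i == ko)%:R by rewrite mxE -val_eqE.
apply/ffunP => X; rewrite !ffunE.
have [koX | koNX] := boolP (ko \in X); last first.
  rewrite big1 => [|i iX]; last first.
    rewrite unitvE; case: (eqVneq i ko) iX => [-> koX|_ _]; last by rewrite mulr0 mul0r.
    by rewrite koX in koNX.
  by case: eqP koNX => // ->; rewrite inE leqnn.
rewrite (bigD1 ko) //= big1 ?addr0 => [|i /andP [_ /negbTE]]; last first.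
  by rewrite unitvE => ->; rewrite mulr0 mul0r.
rewrite unitvE eqxx mulr1 ffunE.
have eq_sets : (X :\ ko == [set j : 'I_m | (k < j)%N]) =
               (X == [set j : 'I_m | (k <= j)%N]).
  apply/eqP/eqP => [eq_X | ->]; apply/setP => j; last first.
    by rewrite !inE -val_eqE /= ltn_neqAle eq_sym.
  move/setP: eq_X => /(_ j); rewrite !inE.
  case: (eqVneq j ko) => [-> _|nj /= ->]; first by rewrite koX leqnn.
  by move: nj; rewrite ltn_neqAle -val_eqE /= eq_sym => ->.
rewrite eq_sets; have [eq_X|] := eqVneq; last by rewrite mulr0.
rewrite mulr1 (_ : [set j in X | (j < ko)%N] = set0) ?cards0 //.
by apply/setP => j; rewrite eq_X !inE; case: leqP.
Qed.

Lemma wedges_unitv (n k : nat) : (k + n = m)%N ->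
  wedges [seq unitv j | j <- iota k n] = ebasis F [set j : 'I_m | (k <= j)%N].
Proof.
elim: n k => [|n IH] k.
  rewrite addn0 => eq_km; congr (ebasis F _).
  by apply/setP => j; rewrite !inE eq_km leqNgt ltn_ord.
move=> kn /=; rewrite IH ?addSnnS // wedgev_unitv //.
by rewrite -kn -addSnnS leq_addr.
Qed.

Lemma ebasis_neq0 (X : {set 'I_m}) : ebasis F X != 0.
Proof.
by apply/eqP => /ffunP /(_ X); rewrite !ffunE eqxx => /eqP; rewrite oner_eq0.
Qed.

(* Complete [s] to a spanning list; the wedge of the standard basis is
   proportional to its wedge, so that wedge cannot vanish. *)
Lemma wedges_free_neq0 s : free s -> wedges s != 0.
Proof.
move=> free_s; apply/negP => /eqP s0.
pose t := (vbasis (<<s>>^C)%VS : seq V) ++ s.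
have span_t : <<t>>%VS = fullv.
  by rewrite span_cat (span_basis (vbasisP _)) addvC addv_complf.
have dim_full : \dim (fullv : {vspace V}) = m by rewrite dimvf /dim /= mul1n.
have size_t : size t = m.
  rewrite size_cat size_tuple dimv_compl dim_full -(dim_span_free free_s) subnK //.
  by rewrite -[X in (_ <= X)%N]dim_full dimvS // subvf.
have size_unitv : size [seq unitv j | j <- iota 0 m] = size t.
  by rewrite size_map size_iota.
have unitv_t : all (fun x => x \in <<t>>%VS) [seq unitv j | j <- iota 0 m].
  by apply/allP => x _; rewrite span_t memvf.
have [k eq_k] := wedges_proportional size_unitv unitv_t.
have := ebasis_neq0 [set j : 'I_m | (0 <= j)%N].
by rewrite -(@wedges_unitv m 0) // eq_k wedges_cat s0 lwedge0 scaler0 eqxx.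
Qed.

Lemma memVw_wedges s v : free s -> (v \in Vw (wedges s)) = (v \in <<s>>%VS).
Proof.
move=> free_s; rewrite memVw; have [v_s | v_ns] := boolP (v \in <<s>>%VS).
  by rewrite wedgev_wedges_span // eqxx.
by apply/negbTE/(@wedges_free_neq0 (v :: s)); rewrite free_cons v_ns.
Qed.

Lemma Vw_wedges s : free s -> Vw (wedges s) = <<s>>%VS.
Proof. by move=> free_s; apply/vspaceP => v; rewrite memVw_wedges. Qed.

Lemma VwZ (c : F) w : c != 0 -> Vw (c *: w) = Vw w.
Proof.
by move=> nz_c; apply/vspaceP => v; rewrite !memVw wedgevZr scaler_eq0 (negbTE nz_c).
Qed.

End WedgeProduct.

Section Annihilators.
Variables (F : fieldType) (m : nat).
Local Notation ext := (ext F m).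
Local Notation V := 'rV[F]_m.
Implicit Types (v : V) (w : ext) (ws : seq ext) (E : {vspace ext}).

Lemma in_VE_basis E ws v : basis_of E ws ->
  in_VE E v <-> v \in (\bigcap_(w <- ws) Vw w)%VS.
Proof.
move=> basis_ws; rewrite memv_bigcap_seq; split.
  by move=> v_E; apply/allP => w w_ws; apply/v_E; rewrite -(span_basis basis_ws) memv_span.
move=> /allP v_ws w w_E; rewrite memVw.
rewrite (coord_basis (X := in_tuple ws) basis_ws w_E) wedgev_sumr big1 // => i _.
have /v_ws := mem_nth 0 (ltn_ord i).
by rewrite memVw wedgevZr => /eqP ->; rewrite scaler0.
Qed.

Lemma in_VuE_basis E ws v : basis_of E ws ->
  (forall w, w \in E -> w != 0 -> (Vw w <= \sum_(w <- ws) Vw w)%VS) ->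
  in_VuE E v <-> v \in (\sum_(w <- ws) Vw w)%VS.
Proof.
move=> basis_ws Vw_sub; split.
  case=> ws' [/allP ws'_E]; apply/subvP; rewrite subv_sum_seq.
  by apply/allP => w /ws'_E /andP [w_E nz_w]; apply: Vw_sub.
move=> v_ws; exists ws; split => //; apply/allP => w w_ws.
rewrite -(span_basis basis_ws) memv_span //=.
exact: free_not0 (basis_free basis_ws) w_ws.
Qed.

Lemma Vw_sub_sum_line E ws : basis_of E ws -> size ws = 1%N ->
  forall w, w \in E -> w != 0 -> (Vw w <= \sum_(w <- ws) Vw w)%VS.
Proof.
case: ws => [|w0 [|]] // basis_ws _ w.
rewrite -(span_basis basis_ws) span_seq1 => /vlineP [c ->].
by rewrite scaler_eq0 negb_or => /andP [nz_c _]; rewrite VwZ // big_seq1.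
Qed.

Definition wedge_repr (l : nat) w (a : seq V) (c : F) :=
  [/\ size a = l, free a, c != 0 & w = c *: wedges a].

Lemma wedge_repr_decomposable l w a c :
  (0 < l)%N -> wedge_repr l w a c -> decomposable_elt l w.
Proof.
move=> l_gt0 [size_a _ _ ->]; case: a size_a => [|x a] size_a; first by rewrite -size_a in l_gt0.
by exists ((c *: x) :: a); rewrite wedges_consZ.
Qed.

Lemma wedge_repr_span_eq l w a c w' a' c' : wedge_repr l w a c ->
  wedge_repr l w' a' c' -> <<a>>%VS = <<a'>>%VS -> w \in <[w']>%VS.
Proof.
move=> [size_a _ nz_c ->] [size_a' _ nz_c' ->] eq_span.
have a_a' : all (fun x => x \in <<a'>>%VS) a by apply/allP => x x_a; rewrite -eq_span memv_span.
have [k ->] := wedges_proportional (etrans size_a (esym size_a')) a_a'.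
by rewrite scalerA -[c * k](divfK nz_c') -scalerA memvZ // memv_line.
Qed.

Lemma wedge_repr_Vw l w a c : wedge_repr l w a c -> Vw w = <<a>>%VS.
Proof. by move=> [_ free_a nz_c ->]; rewrite VwZ // Vw_wedges. Qed.

End Annihilators.

Section CloseTypeI.
Variables (F : fieldType) (m l : nat) (E : {vspace ext F m}) (fs gs : seq 'rV[F]_m).
Local Notation ext := (ext F m).
Local Notation V := 'rV[F]_m.
Hypotheses (size_fs : (size fs).+1 = l) (free_fgs : free (fs ++ gs))
  (def_E : E = <<[seq wedges (rcons fs g) | g <- gs]>>%VS).

Let wedge_fs (h : V) : ext := wedges (rcons fs h).

Lemma wedge_fsDZ a x y : wedge_fs (a *: x + y) = a *: wedge_fs x + wedge_fs y.
Proof. by rewrite /wedge_fs -!cats1 !wedges_cat /= wedgevDl wedgevZl lwedgeDZ. Qed.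

Lemma free_rcons_fs h : h \in <<gs>>%VS -> h != 0 -> free (rcons fs h).
Proof.
move=> h_gs nz_h; have perm_h : perm_eq (rcons fs h) (h :: fs) by rewrite perm_rcons.
rewrite (perm_free perm_h) free_cons.
move: free_fgs; rewrite cat_free => /and3P [-> _ /directv_addP cap0].
rewrite andbT; apply: contra nz_h => h_fs.
by rewrite -memv0 -cap0 memv_cap h_fs.
Qed.

Lemma wedge_fs_inj : {in <<gs>>%VS &, injective wedge_fs}.
Proof.
move=> x y x_gs y_gs eq_xy.
have wedge_xy0 : wedge_fs (x - y) = 0.
  by have := wedge_fsDZ (-1) y x; rewrite !scaleN1r eq_xy addNr addrC.
apply/eqP; rewrite -subr_eq0; apply/negPn/negP => nz_xy.
have := wedges_free_neq0 (free_rcons_fs (memvB x_gs y_gs) nz_xy).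
by rewrite -/(wedge_fs _) wedge_xy0 eqxx.
Qed.

Lemma wedge_fs0 : wedge_fs 0 = 0.
Proof.
apply: wedges_nfree; apply/negP => /(@free_not0 _ _ 0).
by rewrite mem_rcons mem_head eqxx => /(_ isT).
Qed.

Lemma span_rcons_fs_Vw h : (<<rcons fs h>> <= Vw (wedge_fs h))%VS.
Proof. by apply/subvP => x x_fs; rewrite memVw wedgev_wedges_span. Qed.

Lemma span_fs_sub_rcons h : (<<fs>> <= <<rcons fs h>>)%VS.
Proof. by apply: sub_span => x; rewrite mem_rcons inE => ->; rewrite orbT. Qed.

Lemma typeI_elt w : w \in E -> exists2 h, h \in <<gs>>%VS & w = wedge_fs h.
Proof. by rewrite def_E; apply: memv_span_map wedge_fsDZ _ _. Qed.

Lemma typeI_lift ws : {subset ws <= E} ->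
  exists2 hs : seq V, {subset hs <= <<gs>>%VS} & ws = map wedge_fs hs.
Proof.
elim: ws => [|w ws IH] ws_E; first by exists [::].
have [h h_gs ->] := typeI_elt (ws_E w (mem_head _ _)).
have [|hs hs_gs ->] := IH; first by move=> x x_ws; apply: ws_E; rewrite inE x_ws orbT.
by exists (h :: hs) => // x; rewrite inE => /predU1P [->|/hs_gs].
Qed.

Lemma typeI_wedge_repr w : w \in E -> w != 0 ->
  exists2 h, h \in <<gs>>%VS & wedge_repr l w (rcons fs h) 1.
Proof.
case/typeI_elt => h h_gs -> nz_w; exists h => //.
have nz_h : h != 0 by apply: contraNneq nz_w => ->; rewrite wedge_fs0.
by split; rewrite ?size_rcons ?oner_eq0 ?scale1r ?free_rcons_fs.
Qed.

Lemma typeI_Vw_sub w : w \in E -> w != 0 -> (Vw w <= <<fs ++ gs>>)%VS.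
Proof.
move=> w_E /(typeI_wedge_repr w_E) [h h_gs /wedge_repr_Vw ->].
rewrite span_cat -cats1 span_cat addvS // span_seq1.
by apply/subvP => x /vlineP [c ->]; rewrite memvZ.
Qed.

Lemma typeI_sum ws : basis_of E ws -> ws != [::] ->
  (\sum_(w <- ws) Vw w)%VS = <<fs ++ gs>>%VS.
Proof.
move=> basis_ws nz_ws.
have ws_E : {subset ws <= E} by move=> w w_ws; rewrite -(span_basis basis_ws) memv_span.
apply/eqP; rewrite eqEsubv subv_sum_seq; apply/andP; split.
  apply/allP => w w_ws; apply: typeI_Vw_sub; first exact: ws_E.
  exact: free_not0 (basis_free basis_ws) w_ws.
have [hs hs_gs def_ws] := typeI_lift ws_E.
have hs_sum : (<<hs>> <= \sum_(w <- ws) Vw w)%VS.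
  apply/span_subvP => h h_hs; rewrite def_ws big_map.
  apply: subvP (sumv_sup_seq _ h_hs) _ _; apply: subvP (span_rcons_fs_Vw h) _ _.
  by rewrite memv_span // mem_rcons mem_head.
rewrite span_cat subv_add; apply/andP; split.
  case: hs def_ws {hs_gs hs_sum} => [|h hs] def_ws; first by rewrite def_ws in nz_ws.
  rewrite def_ws big_map big_cons; apply: subv_trans (addvSl _ _).
  exact: subv_trans (span_fs_sub_rcons h) (span_rcons_fs_Vw h).
(* [wedge_fs] maps [<<hs>>] onto [E] and is injective on [<<gs>>]. *)
apply: subv_trans hs_sum; apply/span_subvP => g g_gs.
have : wedge_fs g \in <<map wedge_fs hs>>%VS.
  by rewrite -def_ws (span_basis basis_ws) def_E memv_span ?map_f.
case/(memv_span_map wedge_fsDZ) => h h_hs eq_gh.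
have h_gs : h \in <<gs>>%VS by apply: subvP h_hs; apply/span_subvP.
by rewrite (wedge_fs_inj (memv_span g_gs) h_gs eq_gh).
Qed.

Lemma typeI_Vw_sub_sum ws : basis_of E ws ->
  forall w, w \in E -> w != 0 -> (Vw w <= \sum_(w <- ws) Vw w)%VS.
Proof.
move=> basis_ws w w_E nz_w; rewrite typeI_sum ?typeI_Vw_sub //.
apply: contraNneq nz_w => ws0; move: w_E.
by rewrite -(span_basis basis_ws) ws0 span_nil memv0.
Qed.

Lemma typeI_cap ws : basis_of E ws -> (1 < size gs)%N ->
  (\bigcap_(w <- ws) Vw w)%VS = <<fs>>%VS.
Proof.
move=> basis_ws size_gs; apply/eqP; rewrite eqEsubv; apply/andP; split; last first.
  apply/subvP => x x_fs; rewrite memv_bigcap_seq; apply/allP => w w_ws.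
  have /typeI_elt [h _ ->] : w \in E by rewrite -(span_basis basis_ws) memv_span.
  exact: subvP (span_rcons_fs_Vw h) _ (subvP (span_fs_sub_rcons h) _ x_fs).
apply/subvP => v /(in_VE_basis v basis_ws) v_E.
have v_rcons g : g \in gs -> v \in <<rcons fs g>>%VS.
  move=> g_gs; have nz_g := free_not0 (catr_free free_fgs) g_gs.
  rewrite -memVw_wedges ?free_rcons_fs ?memv_span //.
  by apply: v_E; rewrite def_E memv_span //; apply/mapP; exists g.
move: size_gs free_fgs v_rcons; case: gs => [|g1 [|g2 gs']] // _ free_fg12 v_rcons.
have free_g12 : free (fs ++ [:: g1] ++ [:: g2]).
  by move: free_fg12; rewrite -[g1 :: _]/([:: g1; g2] ++ gs') catA => /catl_free.
by rewrite -[fs]cats0 -(span_cap_free free_g12) memv_cap !cats1 !v_rcons ?inE ?eqxx ?orbT.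
Qed.

End CloseTypeI.

Section HatSums.
Variables (F : fieldType) (m : nat).
Local Notation V := 'rV[F]_m.

Definition hat (gs : seq V) (i : nat) := take i gs ++ drop i.+1 gs.

(* The extra vector [x] completing [hs] to a factorisation of [wedges gs] is what
   makes the induction on [gs] go through. *)
Lemma sum_wedges_hat (gs : seq V) (c : nat -> F) : exists x (hs : seq V) (lam : F),
  [/\ size hs = (size gs).-1, all (fun h => h \in <<gs>>%VS) hs, x \in <<gs>>%VS,
      \sum_(i < size gs) c i *: wedges (hat gs i) = lam *: wedges hs &
      (0 < size gs)%N -> wedges (x :: hs) = wedges gs].
Proof.
elim: gs c => [|g gs IH] c.
  by exists 0, [::], 0; rewrite big_ord0 scale0r mem0v.
have [x [hs [lam [size_hs hs_gs x_gs eq_sum eq_x]]]] := IH (fun i => c i.+1).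
have sub_gs : (<<gs>> <= <<g :: gs>>)%VS by rewrite span_cons addvSr.
have g_gs : g \in <<g :: gs>>%VS by rewrite memv_span ?mem_head.
rewrite /= big_ord_recl.
have -> : \sum_(i < size gs) c (lift ord0 i) *: wedges (hat (g :: gs) (lift ord0 i))
          = wedgev g (lam *: wedges hs).
  by rewrite -eq_sum wedgev_sumr; apply: eq_bigr => i _; rewrite wedgevZr.
rewrite wedgevZr [hat _ _]drop0.
have [-> | nz_lam] := eqVneq lam 0.
  exists g, gs, (c 0); rewrite scale0r addr0; split => //.
  by apply/allP => h h_gs; rewrite memv_span // inE h_gs orbT.
have gs_gt0 : (0 < size gs)%N.
  rewrite lt0n; apply: contra nz_lam => /eqP gs0.
  have hs0 : hs = [::] by apply/size0nil; rewrite size_hs gs0.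
  move: eq_sum; rewrite big1 => [|i _]; last by have := ltn_ord i; rewrite {2}gs0.
  by move/eqP; rewrite eq_sym scaler_eq0 hs0 (negbTE (ebasis_neq0 _ _)) orbF.
exists (- x), ((g + (c 0 / lam) *: x) :: hs), lam; split.
- by rewrite /= size_hs prednK.
- rewrite /= memvD ?memvZ ?(subvP sub_gs x x_gs) //.
  by apply/allP => h /(allP hs_gs) /(subvP sub_gs).
- by rewrite memvN (subvP sub_gs).
- rewrite /= wedgevDl wedgevZl -(eq_x gs_gt0) /= scalerDr scalerA.
  by rewrite mulrC divfK // addrC.
- move=> _; rewrite /= wedgevNl wedgevDl wedgevZl wedgevDr wedgevZr wedgevv.
  by rewrite scaler0 addr0 wedgev_anticomm opprK -(eq_x gs_gt0).
Qed.

End HatSums.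

Section CloseTypeII.
Variables (F : fieldType) (m l : nat) (E : {vspace ext F m}) (us gs : seq 'rV[F]_m).
Local Notation ext := (ext F m).
Local Notation V := 'rV[F]_m.
Hypotheses (size_ugs : (size us + size gs = l.+1)%N) (size_gs_dim : size gs = \dim E)
  (free_ugs : free (us ++ gs))
  (def_E : E = <<[seq wedges (us ++ hat gs i) | i <- iota 0 (size gs)]>>%VS).

Lemma typeII_elt w : w \in E -> exists c : nat -> F,
  w = lwedge us (\sum_(i < size gs) c i *: wedges (hat gs i)).
Proof.
rewrite def_E => /memv_span_coef [c ->]; exists c.
rewrite lwedge_sum size_map size_iota; apply: eq_bigr => i _.
by rewrite lwedgeZ -wedges_cat (nth_map 0%N) ?size_iota // nth_iota.
Qed.

Lemma typeII_wedge_repr w : w \in E -> w != 0 -> exists (hs : seq V) (lam : F),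
  wedge_repr l w (us ++ hs) lam /\ all (fun h => h \in <<gs>>%VS) hs.
Proof.
move=> w_E nz_w; have [c def_w] := typeII_elt w_E.
have gs_gt0 : (0 < size gs)%N.
  rewrite lt0n; apply: contra nz_w => /eqP gs0.
  by rewrite def_w big1 ?lwedge0 // => i _; have := ltn_ord i; rewrite {2}gs0.
have [_ [hs [lam [size_hs hs_gs _ eq_sum _]]]] := sum_wedges_hat gs c.
move: nz_w; rewrite def_w eq_sum lwedgeZ -wedges_cat scaler_eq0 negb_or.
case/andP => nz_lam nz_uhs; exists hs, lam; split => //; split => //.
- by rewrite size_cat size_hs; lia.
- by apply: contraNT nz_uhs => /wedges_nfree ->.
Qed.

Lemma span_us_cat_sub (hs : seq V) : all (fun h => h \in <<gs>>%VS) hs ->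
  (<<us ++ hs>> <= <<us ++ gs>>)%VS.
Proof. by move=> /allP hs_gs; rewrite !span_cat addvS //; apply/span_subvP. Qed.

Lemma typeII_Vw_sub w : w \in E -> w != 0 -> (Vw w <= <<us ++ gs>>)%VS.
Proof.
move=> w_E /(typeII_wedge_repr w_E) [hs [lam [/wedge_repr_Vw -> hs_gs]]].
exact: span_us_cat_sub.
Qed.

Lemma span_us_sub_Vw w : w \in E -> (<<us>> <= Vw w)%VS.
Proof.
move=> w_E; have [-> | nz_w] := eqVneq w 0.
  by apply/subvP => x _; rewrite memVw wedgev0r.
have [hs [lam [/wedge_repr_Vw -> _]]] := typeII_wedge_repr w_E nz_w.
by rewrite span_cat addvSl.
Qed.

(* Two independent elements of [E] have distinct [l]-dimensional annihilators
   inside the [(l+1)]-dimensional span of [us ++ gs]. *)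
Lemma typeII_sum ws : basis_of E ws -> (1 < size gs)%N ->
  (\sum_(w <- ws) Vw w)%VS = <<us ++ gs>>%VS.
Proof.
move=> basis_ws size_gs.
have ws_E : {subset ws <= E} by move=> w w_ws; rewrite -(span_basis basis_ws) memv_span.
have ws_nz w : w \in ws -> w != 0 by apply: free_not0 (basis_free basis_ws).
apply/eqP; rewrite eqEsubv subv_sum_seq; apply/andP; split.
  by apply/allP => w w_ws; apply: typeII_Vw_sub; [apply: ws_E | apply: ws_nz].
have size_ws := size_basis_seq basis_ws; rewrite -size_gs_dim in size_ws.
case: ws basis_ws ws_E ws_nz size_ws => [|w0 [|w1 ws]] basis_ws ws_E ws_nz size_ws;
  try by rewrite -size_ws /= in size_gs.
have w0_ws : w0 \in [:: w0, w1 & ws] := mem_head _ _.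
have w1_ws : w1 \in [:: w0, w1 & ws] by rewrite !inE eqxx orbT.
have [hs0 [lam0 [repr0 hs0_gs]]] := typeII_wedge_repr (ws_E _ w0_ws) (ws_nz _ w0_ws).
have [hs1 [lam1 [repr1 hs1_gs]]] := typeII_wedge_repr (ws_E _ w1_ws) (ws_nz _ w1_ws).
have neq_spans : <<us ++ hs0>>%VS != <<us ++ hs1>>%VS.
  apply: contraTneq (basis_free basis_ws) => /(wedge_repr_span_eq repr0 repr1) w0_w1.
  by rewrite free_cons negb_and negbK (subvP _ _ w0_w1) // span_cons addvSl.
have dim_ugs : \dim <<us ++ gs>> = l.+1 by rewrite dim_span_free // size_cat.
have dim_repr hs lam w : wedge_repr l w (us ++ hs) lam -> \dim <<us ++ hs>> = l.
  by case=> size_uhs free_uhs _ _; rewrite dim_span_free.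
rewrite big_cons big_cons addvA (wedge_repr_Vw repr0) (wedge_repr_Vw repr1).
apply: subv_trans (addvSl _ _).
rewrite (addv_hyperplanes (T := <<us ++ gs>>%VS) _ _ _ _ neq_spans) //.
- exact: span_us_cat_sub.
- exact: span_us_cat_sub.
- by rewrite (dim_repr _ _ _ repr0) dim_ugs.
- by rewrite (dim_repr _ _ _ repr1) dim_ugs.
Qed.

Lemma typeII_Vw_sub_sum ws : basis_of E ws ->
  forall w, w \in E -> w != 0 -> (Vw w <= \sum_(w <- ws) Vw w)%VS.
Proof.
move=> basis_ws w w_E nz_w; have [size_gs | size_gs] := ltnP 1 (size gs).
  by rewrite typeII_sum // typeII_Vw_sub.
have E_gt0 : (0 < \dim E)%N.
  rewrite lt0n dimv_eq0; apply: contraNneq nz_w => E0.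
  by rewrite -memv0 -E0.
have size_ws : size ws = 1%N.
  rewrite (size_basis_seq basis_ws); apply/eqP.
  by rewrite eqn_leq -size_gs_dim size_gs /= size_gs_dim.
exact: Vw_sub_sum_line basis_ws size_ws w w_E nz_w.
Qed.

Lemma free_us_hat k : (k < size gs)%N -> free (us ++ hat gs k).
Proof.
move=> lt_k; move: free_ugs; rewrite -{1}(cat_take_drop k gs) (drop_nth 0 lt_k).
exact: free_cat_consr.
Qed.

Lemma typeII_cap ws : basis_of E ws -> (1 < size gs)%N ->
  (\bigcap_(w <- ws) Vw w)%VS = <<us>>%VS.
Proof.
move=> basis_ws size_gs; apply/eqP; rewrite eqEsubv; apply/andP; split; last first.
  apply/subvP => x x_us; rewrite memv_bigcap_seq; apply/allP => w w_ws.
  by apply: subvP x_us; apply: span_us_sub_Vw; rewrite -(span_basis basis_ws) memv_span.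
apply/subvP => v /(in_VE_basis v basis_ws) v_E.
have v_hat k : (k < size gs)%N -> v \in <<us ++ hat gs k>>%VS.
  move=> lt_k; rewrite -memVw_wedges ?free_us_hat //; apply: v_E.
  by rewrite def_E memv_span //; apply/mapP; exists k; rewrite ?mem_iota.
suff v_drop k : (k <= size gs)%N -> v \in <<us ++ drop k gs>>%VS.
  by have := v_drop _ (leqnn _); rewrite drop_size cats0.
elim: k => [_ | k IH lt_k].
  apply: subvP (v_hat 0%N (ltnW size_gs)); apply: sub_span => x.
  by rewrite /hat take0 drop0 !mem_cat => /orP [-> // | /mem_drop ->]; rewrite orbT.
have free_k : free (us ++ take k gs ++ nth 0 gs k :: drop k.+1 gs).
  by rewrite -(drop_nth 0 lt_k) cat_take_drop.
rewrite -(span_cap_free free_k) memv_cap -(drop_nth 0 lt_k) IH ?(ltnW lt_k) //.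
exact: v_hat.
Qed.

End CloseTypeII.

Section CloseSubspaces.
Variables (F : fieldType) (m l : nat) (E : {vspace ext F m}).

Lemma closeI_decomposable : closeI l E -> decomposable_sub l E.
Proof.
case=> fs [gs [size_fs _ free_fgs def_E]] w w_E nz_w.
have [h _ repr_w] := typeI_wedge_repr size_fs free_fgs def_E w_E nz_w.
by apply: wedge_repr_decomposable repr_w; rewrite -size_fs.
Qed.

Lemma closeII_decomposable : (0 < l)%N -> closeII l E -> decomposable_sub l E.
Proof.
move=> l_gt0 [us [gs [size_ugs size_gs free_ugs def_E]]] w w_E nz_w.
rewrite -size_gs in def_E size_ugs.
have [hs [lam [repr_w _]]] := typeII_wedge_repr size_ugs size_gs free_ugs def_E w_E nz_w.
exact: wedge_repr_decomposable repr_w.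
Qed.

Variable ws : seq (ext F m).
Hypothesis basis_ws : basis_of E ws.

Lemma close_Vw_sub_sum : close l E ->
  forall w, w \in E -> w != 0 -> (Vw w <= \sum_(w <- ws) Vw w)%VS.
Proof.
case=> [[fs [gs [size_fs _ free_fgs def_E]]] | [us [gs [size_ugs size_gs free_ugs def_E]]]].
  exact: (typeI_Vw_sub_sum size_fs free_fgs def_E basis_ws).
rewrite -size_gs in def_E size_ugs.
exact: (typeII_Vw_sub_sum size_ugs size_gs free_ugs def_E basis_ws).
Qed.

Hypothesis dim_E_gt1 : (1 < \dim E)%N.

Lemma closeI_dim : closeI l E ->
  \dim (\bigcap_(w <- ws) Vw w)%VS = l.-1 /\
  \dim (\sum_(w <- ws) Vw w)%VS = (l + \dim E).-1.
Proof.
case=> fs [gs [size_fs size_gs free_fgs def_E]].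
have ws_nz : ws != [::].
  by apply: contraTneq dim_E_gt1 => ws0; rewrite -(size_basis_seq basis_ws) ws0.
rewrite (typeI_cap free_fgs def_E basis_ws) ?size_gs //.
rewrite (typeI_sum size_fs free_fgs def_E basis_ws ws_nz).
by rewrite !dim_span_free ?(catl_free free_fgs) // size_cat -size_fs -size_gs.
Qed.

Lemma closeII_dim : closeII l E ->
  \dim (\bigcap_(w <- ws) Vw w)%VS = (l.+1 - \dim E)%N /\
  \dim (\sum_(w <- ws) Vw w)%VS = l.+1.
Proof.
case=> us [gs [size_ugs size_gs free_ugs def_E]].
rewrite -size_gs in def_E size_ugs.
have size_gs_gt1 : (1 < size gs)%N by rewrite size_gs.
rewrite (typeII_cap size_ugs size_gs free_ugs def_E basis_ws size_gs_gt1).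
rewrite (typeII_sum size_ugs size_gs free_ugs def_E basis_ws size_gs_gt1).
by rewrite -size_gs !dim_span_free ?(catl_free free_ugs) // size_cat -size_ugs addnK.
Qed.

End CloseSubspaces.

Unset Implicit Arguments.

Theorem lemma2p5 (F : fieldType) (m l : nat) (E : {vspace ext F m}) :
  (0 < l)%N -> (l <= m)%N -> (E <= extpow F m l)%VS -> close l E ->
  decomposable_sub l E /\
  (forall ws : seq (ext F m), basis_of E ws ->
     (forall v : 'rV[F]_m, in_VE E v <-> v \in (\bigcap_(w <- ws) Vw w)%VS) /\
     (forall v : 'rV[F]_m, in_VuE E v <-> v \in (\sum_(w <- ws) Vw w)%VS) /\
     ((1 < \dim E)%N ->
        (closeI l E ->
           \dim (\bigcap_(w <- ws) Vw w)%VS = l.-1 /\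
           \dim (\sum_(w <- ws) Vw w)%VS = (l + \dim E).-1) /\
        (closeII l E ->
           \dim (\bigcap_(w <- ws) Vw w)%VS = (l.+1 - \dim E)%N /\
           \dim (\sum_(w <- ws) Vw w)%VS = l.+1))).
Proof.
move=> l_gt0 _ _ close_E; split.
  by case: close_E => [/closeI_decomposable | /(closeII_decomposable l_gt0)].
move=> ws basis_ws; split; first by move=> v; apply: in_VE_basis.
split; first by move=> v; apply: in_VuE_basis (close_Vw_sub_sum basis_ws close_E).
by move=> dim_E_gt1; split; [apply: closeI_dim | apply: closeII_dim].
Qed.
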